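(* Suppose each net demand function $D_i$ ($i=1,\dots,N$) satisfies the Net Demand Assumption. Let $\mathcal L$ be the Lagrangian defined below. Then a vector $(\mathbf P^*,\mathcal Q^*,\mathbf E^*,\mathbf L^* )\in\mathbb R^N_{>0}\times\mathbb R^{N(N+2)}_{\ge0}$ is a saddle point of $\mathcal L$ on $\mathbb R^N_{\ge0}\times\mathbb R^{N(N+2)}_{\ge0}$ if and only if it is a competitive equilibrium.
   Context: Economy with $N$ sectors; sector $i$ has production function $F_i:\mathbb R^{N+2}_{\ge0}\to\mathbb R_{\ge0}$, labor cost $W_i:\mathbb R_{\ge0}\to\mathbb R_{>0}$; carbon price $P_E>0$ is fixed. An allocation is $(\mathcal Q,\mathbf E,\mathbf L)$ with $\mathcal Q=(q_{ij})_{i,j=1}^N$, $\mathbf q_i=(q_{ij})_j$, $\mathbf E=(E_i)$, $\mathbf L=(L_i)$, all nonnegative. Profit $\Pi_i(\mathbf P,P_E,\mathbf q_i,E_i,L_i)=P_iF_i(\mathbf q_i,E_i,L_i)-\sum_jP_jq_{ij}-P_EE_i-W_i(L_i)$. Net Demand Assumption: $D_i:\mathbb R_{\ge0}\to\mathbb R$ is strictly decreasing and continuous on $\mathbb R_{>0}$, with $\lim_{P\to0}D_i(P)=\infty$ and $\lim_{P\to\infty}D_i(P)\le0$. Consumer surplus $\Delta_i(P)=\int_1^PD_i(z)\,dz$ (i.e. $-\int_P^1D_i$ for $P\le1$, possibly $-\infty$ at $P=0$). Lagrangian: $\mathcal L(\mathbf P,\mathcal Q,\mathbf E,\mathbf L)=\sum_{i=1}^N\{P_iF_i(\mathbf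 q_i,E_i,L_i)-\sum_jP_jq_{ij}-P_EE_i-W_i(L_i)-\Delta_i(P_i)\}$. Saddle point: $(\mathbf P^*,\mathcal Q^*,\mathbf E^*,\mathbf L^* )$ with $\mathcal L(\mathbf P^*,\mathcal Q,\mathbf E,\mathbf L)\le\mathcal L(\mathbf P^*,\mathcal Q^*,\mathbf E^*,\mathbf L^* )\le\mathcal L(\mathbf P,\mathcal Q^*,\mathbf E^*,\mathbf L^* )$ for all $\mathbf P\in\mathbb R^N_{\ge0}$, $(\mathcal Q,\mathbf E,\mathbf L)\in\mathbb R^{N(N+2)}_{\ge0}$. Competitive equilibrium: $(\mathbf P^*,\mathcal Q^*,\mathbf E^*,\mathbf L^* )\in\mathbb R^N_{\ge0}\times\mathbb R^{N(N+2)}_{\ge0}$ such that for each $i$: (i) market clearing $F_i(\mathbf q_i^*,E_i^*,L_i^* )=D_i(P_i^* )+\sum_{j=1}^Nq^*_{ji}$; (ii) $(\mathbf q_i^*,E_i^*,L_i^* )$ maximizes $\Pi_i(\mathbf P^*,P_E,\cdot)$ over $\mathbb R^{N+2}_{\ge0}$. *)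

From HB Require Import structures.
From mathcomp Require Import all_boot all_order all_algebra.
From mathcomp Require Import all_classical all_reals all_analysis.
Set Implicit Arguments. Unset Strict Implicit. Unset Printing Implicit Defensive.
Import Order.TTheory GRing.Theory Num.Theory.
Import numFieldNormedType.Exports.
Local Open Scope classical_set_scope.
Local Open Scope ring_scope.

(* Net Demand Assumption for D : R -> R (only values on [0,oo) matter). *)
Definition net_demand_assumption (R : realType) (D : R -> R) : Prop :=
  (forall x y : R, 0 < x -> x < y -> D y < D x) /\
  {in `]0, +oo[, continuous D} /\
  (D x @[x --> 0^'+] --> +oo) /\
  (exists l : \bar R, ((D x)%:E @[x --> +oo] --> l) /\ (l <= 0)%E).

Definition surplus (R : realType) (D : R -> R) (P : R) : \bar R :=
  if 1 <= P then (\int[@lebesgue_measure R]_(x in `[1%R, P]%classic) (D x)%:E)%E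
  else (- \int[@lebesgue_measure R]_(x in `[P, 1%R]%classic) (D x)%:E)%E.

Definition profit (R : realType) (N : nat)
  (F : 'I_N -> ('I_N -> R) -> R -> R -> R) (W : 'I_N -> R -> R)
  (i : 'I_N) (P : 'I_N -> R) (PE : R) (qi : 'I_N -> R) (Ei Li : R) : R :=
  P i * F i qi Ei Li - \sum_(j < N) P j * qi j - PE * Ei - W i Li.

Definition lagrangian (R : realType) (N : nat)
  (F : 'I_N -> ('I_N -> R) -> R -> R -> R) (W : 'I_N -> R -> R)
  (D : 'I_N -> R -> R) (PE : R)
  (P : 'I_N -> R) (Q : 'I_N -> 'I_N -> R) (E L : 'I_N -> R) : \bar R :=
  (\sum_(i < N) ((profit F W i P PE (Q i) (E i) (L i))%:E
                   - surplus (D i) (P i)))%E.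

Definition nonneg_alloc (R : realType) (N : nat)
  (Q : 'I_N -> 'I_N -> R) (E L : 'I_N -> R) : Prop :=
  (forall i j, 0 <= Q i j) /\ (forall i, 0 <= E i) /\ (forall i, 0 <= L i).

Definition saddle_point (R : realType) (N : nat)
  (F : 'I_N -> ('I_N -> R) -> R -> R -> R) (W : 'I_N -> R -> R)
  (D : 'I_N -> R -> R) (PE : R)
  (Ps : 'I_N -> R) (Qs : 'I_N -> 'I_N -> R) (Es Ls : 'I_N -> R) : Prop :=
  (forall Q E L, nonneg_alloc Q E L ->
     (lagrangian F W D PE Ps Q E L <= lagrangian F W D PE Ps Qs Es Ls)%E) /\
  (forall P : 'I_N -> R, (forall i, 0 <= P i) ->
     (lagrangian F W D PE Ps Qs Es Ls <= lagrangian F W D PE P Qs Es Ls)%E).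

Definition competitive_equilibrium (R : realType) (N : nat)
  (F : 'I_N -> ('I_N -> R) -> R -> R -> R) (W : 'I_N -> R -> R)
  (D : 'I_N -> R -> R) (PE : R)
  (Ps : 'I_N -> R) (Qs : 'I_N -> 'I_N -> R) (Es Ls : 'I_N -> R) : Prop :=
  (forall i, 0 <= Ps i) /\ nonneg_alloc Qs Es Ls /\
  forall i : 'I_N,
    F i (Qs i) (Es i) (Ls i) = D i (Ps i) + \sum_(j < N) Qs j i /\
    (forall (qi : 'I_N -> R) (Ei Li : R),
       (forall j, 0 <= qi j) -> 0 <= Ei -> 0 <= Li ->
       profit F W i Ps PE qi Ei Li <= profit F W i Ps PE (Qs i) (Es i) (Ls i)).

From mathcomp Require Import all_boot all_order all_algebra.
From mathcomp Require Import all_classical all_reals all_analysis.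
From mathcomp Require Import measurable_realfun lra.
Import Order.TTheory GRing.Theory Num.Theory.
Import numFieldNormedType.Exports.
Set Implicit Arguments. Unset Strict Implicit. Unset Printing Implicit Defensive.
Local Open Scope classical_set_scope.
Local Open Scope ring_scope.

(* For positive prices the Lagrangian is finite and separates in two ways.  As
   a function of the inputs of sector i alone it is the profit of sector i, so
   maximality in the allocation is profit maximisation.  As a function of P_i
   alone it is P_i y_i - Delta_i(P_i), where y_i is the output of sector i not
   used as an input by the sectors.  Delta_i is concave with slope D_i: the
   tangent-line bound Delta_i(p) <= Delta_i(P_i) + (p - P_i) D_i(P_i) follows
   from monotone bounds on the integral of D_i, and still holds at p = 0, where
   Delta_i may be -oo.  So P_i minimises the Lagrangian when y_i = D_i(P_i);
   conversely, by continuity of D_i, D_i(P_i) is the only slope of a line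
   supporting Delta_i at P_i, so minimality forces market i to clear. *)

Lemma integral_ge_cst d (T : measurableType d) (R : realType)
    (mu : {measure set T -> \bar R}) (A : set T) (f : T -> R) (c : R) :
  measurable A -> measurable_fun A f ->
  (forall x, A x -> c <= f x) ->
  (c%:E * mu A <= \int[mu]_(x in A) (f x)%:E)%E.
Proof.
move=> mA mf cf.
have mfE : measurable_fun A (EFin \o f) by exact/measurable_EFinP.
have [c0|c0] := leP 0 c.
  rewrite -(integral_cst mu mA); apply: ge0_le_integral => //=.
have fneg : (\int[mu]_(x in A) (EFin \o f)^\- x <= (- c)%:E * mu A)%E.
  rewrite -(integral_cst mu mA); apply: ge0_le_integral => //=.
  - exact: measurable_funeneg.
  - move=> x Ax; rewrite funenegE /= ge_max !lee_fin lerN2 cf //=.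
    by rewrite lerNr oppr0 ltW.
have -> : (c%:E * mu A = 0 - (- c)%:E * mu A)%E by rewrite sub0e EFinN mulNe oppeK.
rewrite integralE.
by apply: leeB fneg; apply: integral_ge0 => x _; exact: funepos_ge0.
Qed.

Lemma lebesgue_measure_itv_le (R : realType) (ba bb : bool) (a b : R) : a <= b ->
  lebesgue_measure [set` Interval (BSide ba a) (BSide bb b)] = (b - a)%:E.
Proof.
rewrite le_eqVlt => /predU1P[->|ab]; rewrite lebesgue_measure_itv /= lte_fin.
  by rewrite ltxx subrr.
by rewrite ab EFinB.
Qed.

Lemma disjoint_itv_split (R : realType) (a b : itv_bound R) (m : R) :
  [disjoint [set` Interval a (BLeft m)] & [set` Interval (BLeft m) b]].
Proof.
rewrite disj_set2E; apply/eqP/seteqP; split => // x [] /=.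
rewrite !itv_boundlr => /andP[_ xm] /andP[mx _].
by have := le_trans xm mx; rewrite bnd_simp ltxx.
Qed.

Section concave_surplus.
Variables (R : realType) (D : R -> R).
Hypothesis D_nonincr : forall {x y : R}, 0 < x -> x <= y -> D y <= D x.
Hypothesis D_cont : {in `]0, +oo[, continuous D}.
Local Notation mu := (@lebesgue_measure R).

Lemma measurable_fun_demand (A : set R) :
  measurable A -> A `<=` `]0, +oo[ -> measurable_fun A D.
Proof.
move=> mA sA; apply: (measurable_funS _ sA) => //.
apply: open_continuous_measurable_fun; first exact: interval_open.
by move=> x; rewrite inE => /D_cont.
Qed.

Lemma integrable_demand (a b : R) : 0 < a -> mu.-integrable `[a, b] (EFin \o D).
Proof.
move=> a0; apply: measurable_bounded_integrable => //.
- by rewrite /= lebesgue_measure_itv; case: ifP => //= _; rewrite -EFinD ltry.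
- apply: measurable_fun_demand => // x /=; rewrite !in_itv /= andbT.
  by case/andP => /(lt_le_trans a0).
- exists (`|D a| + `|D b|); split; first by rewrite num_real.
  move=> M /ltW hM x /=; rewrite in_itv /= => /andP[ax xb]; apply: le_trans hM.
  have := D_nonincr a0 ax; have := D_nonincr (lt_le_trans a0 ax) xb.
  have := ler_norm (D a); have := ler_norm (- D b); rewrite normrN.
  have := normr_ge0 (D a); have := normr_ge0 (D b).
  by rewrite ler_norml => *; apply/andP; split; lra.
Qed.

Lemma Rintegral_demand_EFin (a b : R) : 0 < a ->
  (\int[mu]_(x in `[a, b]) D x)%:E = (\int[mu]_(x in `[a, b]) (D x)%:E)%E.
Proof.
by move=> a0; rewrite /Rintegral fineK // integrable_fin_num // integrable_demand.
Qed.

Lemma Rintegral_demand_bounds (a b : R) : 0 < a -> a <= b ->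
  (b - a) * D b <= \int[mu]_(x in `[a, b]) D x <= (b - a) * D a.
Proof.
move=> a0 ab.
have cstE c : \int[mu]_(x in `[a, b]) c = (b - a) * c.
  by rewrite Rintegral_cst //= lebesgue_measure_itv_le // mulrC.
have cst_int c : mu.-integrable `[a, b] (EFin \o cst c).
  apply: measurable_bounded_integrable => //.
    by rewrite /= lebesgue_measure_itv_le // ltry.
  by exists `|c|; split; [rewrite num_real | move=> M cM x _; exact: ltW].
rewrite -!cstE; apply/andP; split; apply: le_Rintegral => //.
- exact: cst_int.
- exact: integrable_demand.
- move=> x /=; rewrite in_itv /= => /andP[ax xb].
  exact: D_nonincr (lt_le_trans a0 ax) xb.
- exact: integrable_demand.
- exact: cst_int.
- by move=> x /=; rewrite in_itv /= => /andP[ax _]; exact: D_nonincr a0 ax.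
Qed.

Lemma Rintegral_demand_split (a c b : R) : 0 < a -> a <= c -> c <= b ->
  \int[mu]_(x in `[a, b]) D x =
  \int[mu]_(x in `[a, c]) D x + \int[mu]_(x in `[c, b]) D x.
Proof.
move=> a0 ac cb; rewrite (@itv_bndbnd_setU _ _ _ (BLeft c)) ?bnd_simp //.
rewrite Rintegral_setU //.
- rewrite Rintegral_itv_bndo_bndc //.
  by apply: integrableS (integrable_demand b a0) => //; apply: subset_itvl.
- by rewrite -itv_bndbnd_setU ?bnd_simp //; exact: integrable_demand.
- exact: disjoint_itv_split.
Qed.

Definition rsurplus (p : R) : R :=
  if 1 <= p then \int[mu]_(x in `[1, p]) D x else - \int[mu]_(x in `[p, 1]) D x.

Lemma surplusE (p : R) : 0 < p -> surplus D p = (rsurplus p)%:E.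
Proof.
move=> p0; rewrite /surplus /rsurplus.
by case: ifP => _; rewrite ?EFinN Rintegral_demand_EFin.
Qed.

Lemma rsurplus1 : rsurplus 1 = 0.
Proof.
have := Rintegral_demand_bounds ltr01 (lexx 1).
by rewrite subrr !mul0r -eq_le /rsurplus lexx => /eqP.
Qed.

Lemma rsurplusB (a b : R) : 0 < a -> a <= b ->
  rsurplus b - rsurplus a = \int[mu]_(x in `[a, b]) D x.
Proof.
move=> a0 ab; rewrite /rsurplus; case: ifPn => b1; case: ifPn => a1.
- by rewrite (@Rintegral_demand_split 1 a b) //; lra.
- by rewrite (@Rintegral_demand_split a 1 b) //; [lra | rewrite ltW // ltNge].
- by move: b1; rewrite (le_trans a1 ab).
- by rewrite (@Rintegral_demand_split a b 1) //; [lra | rewrite ltW // ltNge].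
Qed.

Lemma rsurplusB_bounds (a b : R) : 0 < a -> a <= b ->
  (b - a) * D b <= rsurplus b - rsurplus a <= (b - a) * D a.
Proof. by move=> a0 ab; rewrite rsurplusB //; exact: Rintegral_demand_bounds. Qed.

Lemma rsurplus_le_tangent (ps p : R) : 0 < ps -> 0 < p ->
  rsurplus p <= rsurplus ps + (p - ps) * D ps.
Proof.
move=> ps0 p0; have [psp|pps] := leP ps p.
  by have /andP[_] := rsurplusB_bounds ps0 psp; nra.
by have /andP[+ _] := rsurplusB_bounds p0 (ltW pps); nra.
Qed.

Lemma surplus0_le_tangent (ps : R) : 0 < ps ->
  (surplus D 0 <= (rsurplus ps - ps * D ps)%:E)%E.
Proof.
move=> ps0; set m := Num.min ps 1.
have m0 : 0 < m by rewrite lt_min ps0 ltr01.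
have m1 : m <= 1 by rewrite ge_min lexx orbT.
have mps : m <= ps by rewrite ge_min lexx.
have mD01 : measurable_fun (`]0, 1] : set R) (EFin \o D).
  apply/measurable_EFinP; apply: measurable_fun_demand => // x /=.
  by rewrite !in_itv /= andbT => /andP[].
have lb0m : ((D m)%:E * m%:E <= \int[mu]_(x in `]0%R, m[) (D x)%:E)%E.
  have := lebesgue_measure_itv_le false true (ltW m0); rewrite subr0 => <-.
  apply: integral_ge_cst => //.
    by apply: measurable_fun_demand => // x /=; rewrite !in_itv /= andbT => /andP[].
  by move=> x /=; rewrite in_itv /= => /andP[x0 xm]; exact: D_nonincr x0 (ltW xm).
rewrite /surplus ler10 leeNl -EFinN opprB -integral_itv_obnd_cbnd //.
rewrite (@itv_bndbnd_setU _ _ _ (BLeft m)) ?bnd_simp // integral_setU //.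
- rewrite -Rintegral_demand_EFin // -rsurplusB // rsurplus1 sub0r.
  apply: le_trans (leeD lb0m (lexx _)); rewrite -EFinM -EFinD lee_fin.
  by have := rsurplus_le_tangent ps0 m0; have := D_nonincr m0 mps; nra.
- by rewrite -itv_bndbnd_setU ?bnd_simp.
- exact: disjoint_itv_split.
Qed.

Lemma surplus_le_tangent (ps p : R) : 0 < ps -> 0 <= p ->
  (surplus D p <= (rsurplus ps + (p - ps) * D ps)%:E)%E.
Proof.
move=> ps0; rewrite le_eqVlt => /predU1P[<-|p0].
  by rewrite sub0r mulNr; exact: surplus0_le_tangent.
by rewrite surplusE // lee_fin; exact: rsurplus_le_tangent.
Qed.

Lemma rsurplus_supergradient (ps y : R) : 0 < ps ->
  (forall p, 0 < p -> rsurplus p <= rsurplus ps + (p - ps) * y) -> y = D ps.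
Proof.
move=> ps0 sup.
have D_le p : ps < p -> D p <= y.
  move=> psp; have := sup p (lt_trans ps0 psp).
  have /andP[+ _] := rsurplusB_bounds ps0 (ltW psp) => ? ?.
  have : (p - ps) * D p <= (p - ps) * y by nra.
  by rewrite ler_pM2l // subr_gt0.
have D_ge p : 0 < p -> p < ps -> y <= D p.
  move=> p0 pps; have := sup p p0.
  have /andP[_ +] := rsurplusB_bounds p0 (ltW pps) => ? ?.
  have : (ps - p) * y <= (ps - p) * D p by nra.
  by rewrite ler_pM2l // subr_gt0.
have Dps : D x @[x --> ps] --> D ps by apply: D_cont; rewrite in_itv /= andbT.
apply/eqP; rewrite eq_le; apply/andP; split.
- apply: (cvgr_to_ge (cvg_at_left_filter Dps)); near=> p; apply: D_ge.
  + by near: p; exact: nbhs_left_gt.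
  + by near: p; exact: nbhs_left_lt.
- apply: (cvgr_to_le (cvg_at_right_filter Dps)); near=> p; apply: D_le.
  by near: p; exact: nbhs_right_gt.
Unshelve. all: by end_near.
Qed.

Lemma demand_price_minimizes (ps p : R) : 0 < ps -> 0 <= p ->
  ((ps * D ps)%:E - surplus D ps <= (p * D ps)%:E - surplus D p)%E.
Proof.
move=> ps0 p0; rewrite surplusE // -EFinB.
apply: le_trans (leeB (lexx _) (surplus_le_tangent ps0 p0)).
by rewrite -EFinB lee_fin; nra.
Qed.

End concave_surplus.

Lemma net_demand_nonincr (R : realType) (D : R -> R) : net_demand_assumption D ->
  forall x y : R, 0 < x -> x <= y -> D y <= D x.
Proof.
case=> D_decr _ x y x0; rewrite le_eqVlt => /predU1P[-> //|xy].
exact/ltW/D_decr.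
Qed.

Lemma net_demand_cont (R : realType) (D : R -> R) : net_demand_assumption D ->
  {in `]0, +oo[, continuous D}.
Proof. by case=> _ []. Qed.

Lemma ler_sum_update (R : numDomainType) (n : nat) (f g : 'I_n -> R) (i : 'I_n) :
  (forall k, k != i -> f k = g k) -> (\sum_k f k <= \sum_k g k) = (f i <= g i).
Proof.
move=> fg; rewrite (bigD1 i) //= [X in _ <= X](bigD1 i) //=.
by rewrite (eq_bigr _ fg) lerD2r.
Qed.

Section economy.
Variables (R : realType) (N : nat).
Variables (F : 'I_N -> ('I_N -> R) -> R -> R -> R) (W : 'I_N -> R -> R).
Variables (D : 'I_N -> R -> R) (PE : R).
Hypothesis D_nonincr : forall i (x y : R), 0 < x -> x <= y -> D i y <= D i x.
Hypothesis D_cont : forall i, {in `]0, +oo[, continuous (D i)}.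
(* otherwise [i] would be implicit, being inferable from the unfolded [continuous] *)
Arguments D_cont : clear implicits.

Definition net_supply (Q : 'I_N -> 'I_N -> R) (E L : 'I_N -> R) (i : 'I_N) : R :=
  F i (Q i) (E i) (L i) - \sum_(j < N) Q j i.

Definition input_cost (E L : 'I_N -> R) (i : 'I_N) : R := PE * E i + W i (L i).

Lemma sum_profitE (P : 'I_N -> R) (Q : 'I_N -> 'I_N -> R) (E L : 'I_N -> R) :
  \sum_(i < N) profit F W i P PE (Q i) (E i) (L i) =
  \sum_(i < N) (P i * net_supply Q E L i - input_cost E L i).
Proof.
have -> : \sum_(i < N) profit F W i P PE (Q i) (E i) (L i) =
    \sum_(i < N) (P i * F i (Q i) (E i) (L i) - input_cost E L i)
    - \sum_(i < N) \sum_(j < N) P j * Q i j.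
  by rewrite -sumrB; apply: eq_bigr => i _; rewrite /profit /input_cost; lra.
rewrite exchange_big -sumrB; apply: eq_bigr => i _.
by rewrite /net_supply mulrBr mulr_sumr; lra.
Qed.

Lemma lagrangianE (P : 'I_N -> R) (Q : 'I_N -> 'I_N -> R) (E L : 'I_N -> R) :
  lagrangian F W D PE P Q E L = (\sum_(i < N)
    ((P i * net_supply Q E L i - input_cost E L i)%:E - surplus (D i) (P i)))%E.
Proof.
rewrite /lagrangian big_split /= [RHS]big_split /=; congr (_ + _)%E.
by rewrite !sumEFin sum_profitE.
Qed.

Lemma lagrangian_profitE (P : 'I_N -> R) (Q : 'I_N -> 'I_N -> R) (E L : 'I_N -> R) :
  (forall i, 0 < P i) ->
  lagrangian F W D PE P Q E L = (\sum_(i < N)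
    (profit F W i P PE (Q i) (E i) (L i) - rsurplus (D i) (P i)))%:E.
Proof.
move=> P0; rewrite /lagrangian -sumEFin; apply: eq_bigr => i _.
by rewrite (surplusE (D_nonincr i) (D_cont i) (P0 i)) EFinB.
Qed.

Lemma lagrangian_net_supplyE (P : 'I_N -> R) (Q : 'I_N -> 'I_N -> R) (E L : 'I_N -> R) :
  (forall i, 0 < P i) ->
  lagrangian F W D PE P Q E L = (\sum_(i < N)
    (P i * net_supply Q E L i - input_cost E L i - rsurplus (D i) (P i)))%:E.
Proof.
move=> P0; rewrite lagrangianE -sumEFin; apply: eq_bigr => i _.
by rewrite (surplusE (D_nonincr i) (D_cont i) (P0 i)) EFinB.
Qed.

Variables (Ps : 'I_N -> R) (Qs : 'I_N -> 'I_N -> R) (Es Ls : 'I_N -> R).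
Hypothesis Ps_gt0 : forall i, 0 < Ps i.

Local Notation lag := (lagrangian F W D PE).

Lemma market_clearing_of_price_min :
  (forall P, (forall i, 0 <= P i) -> (lag Ps Qs Es Ls <= lag P Qs Es Ls)%E) ->
  forall i, net_supply Qs Es Ls i = D i (Ps i).
Proof.
move=> Pmin i; apply: (rsurplus_supergradient (D_nonincr i) (D_cont i) (Ps_gt0 i)).
move=> p p0; pose P k := if k == i then p else Ps k.
have P_gt0 k : 0 < P k by rewrite /P; case: ifP.
have := Pmin P (fun k => ltW (P_gt0 k)).
rewrite !lagrangian_net_supplyE // lee_fin (ler_sum_update (i := i)).
  by rewrite /P eqxx; nra.
by move=> k /negbTE ki; rewrite /P ki.
Qed.

Lemma profit_max_of_alloc_max : nonneg_alloc Qs Es Ls ->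
  (forall Q E L, nonneg_alloc Q E L -> (lag Ps Q E L <= lag Ps Qs Es Ls)%E) ->
  forall i qi Ei Li, (forall j, 0 <= qi j) -> 0 <= Ei -> 0 <= Li ->
  profit F W i Ps PE qi Ei Li <= profit F W i Ps PE (Qs i) (Es i) (Ls i).
Proof.
move=> [Qs0 [Es0 Ls0]] Amax i qi Ei Li qi0 Ei0 Li0.
pose upd T (x : T) (y : 'I_N -> T) k := if k == i then x else y k.
have : nonneg_alloc (upd _ qi Qs) (upd _ Ei Es) (upd _ Li Ls).
  by split; [|split] => k; rewrite /upd; case: ifP.
move=> /Amax; rewrite !lagrangian_profitE // lee_fin (ler_sum_update (i := i)).
  by rewrite /upd eqxx lerD2r.
by move=> k /negbTE ki; rewrite /upd ki.
Qed.

Lemma alloc_max_of_profit_max :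
  (forall i qi Ei Li, (forall j, 0 <= qi j) -> 0 <= Ei -> 0 <= Li ->
    profit F W i Ps PE qi Ei Li <= profit F W i Ps PE (Qs i) (Es i) (Ls i)) ->
  forall Q E L, nonneg_alloc Q E L -> (lag Ps Q E L <= lag Ps Qs Es Ls)%E.
Proof.
move=> pmax Q E L [Q0 [E0 L0]].
rewrite !lagrangian_profitE // lee_fin; apply: ler_sum => k _.
by rewrite lerD2r; apply: pmax.
Qed.

Lemma price_min_of_market_clearing :
  (forall i, net_supply Qs Es Ls i = D i (Ps i)) ->
  forall P, (forall i, 0 <= P i) -> (lag Ps Qs Es Ls <= lag P Qs Es Ls)%E.
Proof.
move=> clear P P0; rewrite !lagrangianE; apply: lee_sum => k _.
rewrite clear !EFinB addeAC [X in (_ <= X)%E]addeAC leeD2r //.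
exact: (demand_price_minimizes (D_nonincr k) (D_cont k) (Ps_gt0 k) (P0 k)).
Qed.

End economy.

Theorem lemma3p1 (R : realType) (N : nat)
  (F : 'I_N -> ('I_N -> R) -> R -> R -> R) (W : 'I_N -> R -> R)
  (D : 'I_N -> R -> R) (PE : R)
  (hF : forall i (qi : 'I_N -> R) (Ei Li : R),
          (forall j, 0 <= qi j) -> 0 <= Ei -> 0 <= Li -> 0 <= F i qi Ei Li)
  (hW : forall i (Li : R), 0 <= Li -> 0 < W i Li)
  (hPE : 0 < PE)
  (hD : forall i, net_demand_assumption (D i))
  (Ps : 'I_N -> R) (Qs : 'I_N -> 'I_N -> R) (Es Ls : 'I_N -> R)
  (hPs : forall i, 0 < Ps i)
  (hA : nonneg_alloc Qs Es Ls) :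
  saddle_point F W D PE Ps Qs Es Ls <-> competitive_equilibrium F W D PE Ps Qs Es Ls.
Proof.
have D_nonincr i := net_demand_nonincr (hD i).
have D_cont i := net_demand_cont (hD i).
split.
- move=> [Amax Pmin]; split; first by move=> i; exact: ltW (hPs i).
  split=> // i; split.
    by rewrite -(market_clearing_of_price_min D_nonincr D_cont hPs Pmin) subrK.
  exact: (profit_max_of_alloc_max D_nonincr D_cont hPs hA Amax).
- move=> [_ [_ ce]]; split.
  + by apply: alloc_max_of_profit_max => // i; case: (ce i).
  + apply: price_min_of_market_clearing => // i.
    by rewrite /net_supply; case: (ce i) => -> _; rewrite addrK.
Qed.
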